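(* Let $(\mathfrak g,[\cdot,\cdot],[\![\cdot,\cdot,\cdot]\!])$ be a Lie-Yamaguti algebra and let $T:\mathfrak g^*\to\mathfrak g$ be an invertible linear map that is skew-symmetric, i.e. $\langle\alpha,T(\beta)\rangle+\langle\beta,T(\alpha)\rangle=0$ for all $\alpha,\beta\in\mathfrak g^*$. Define $\omega\in\wedge^2\mathfrak g^*$ by $\omega(x,y)=\langle T^{-1}(x),y\rangle$. Then $\omega$ is a symplectic structure on $\mathfrak g$ if and only if $T$ is a (skew-symmetric) relative Rota-Baxter operator on $\mathfrak g$ with respect to the coadjoint representation $(\mathfrak g^*;\mathrm{ad}^*,-\mathfrak R^*\tau)$.
   Context: All vector spaces are over a field of characteristic $0$. A Lie-Yamaguti algebra is a vector space $\mathfrak g$ with a bilinear skew-symmetric $[\cdot,\cdot]$ and a trilinear $[\![\cdot,\cdot,\cdot]\!]$ skew-symmetric in its first two arguments such that for all $x,y,z,w,t$: (1) $[[x,y],z]+[[y,z],x]+[[z,x],y]+[\![x,y,z]\!]+[\![y,z,x]\!]+[\![z,x,y]\!]=0$; (2) $[\![[x,y],z,w]\!]+[\![[y,z],x,w]\!]+[\![[z,x],y,w]\!]=0$; (3) $[\![x,y,[z,w]]\!]=[[\![x,y,z]\!],w]+[z,[\![x,y,w]\!]]$; (4) $[\![x,y,[\![z,w,t]\!]]\!]=[\![[\![x,y,z]\!],w,t]\!]+[\![z,[\![x,y,w]\!],t]\!]+[\![z,w,[\![x,y,t]\!]]\!]$. A symplectic structure on $\mathfrak g$ is a nondegenerate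 skew-symmetric bilinear form $\omega$ such that for all $x,y,z,w$: $\omega(x,[y,z])+\omega(y,[z,x])+\omega(z,[x,y])=0$ and $\omega(z,[\![x,y,w]\!])-\omega(x,[\![w,z,y]\!])+\omega(y,[\![w,z,x]\!])-\omega(w,[\![x,y,z]\!])=0$. For a representation $(V;\rho,\mu)$ (linear $\rho:\mathfrak g\to\mathfrak{gl}(V)$, bilinear $\mu:\otimes^2\mathfrak g\to\mathfrak{gl}(V)$) put $D_{\rho,\mu}(x,y)=\mu(y,x)-\mu(x,y)+[\rho(x),\rho(y)]-\rho([x,y])$; a relative Rota-Baxter operator with respect to $(V;\rho,\mu)$ is a linear $T:V\to\mathfrak g$ with $[Tu,Tv]=T(\rho(Tu)v-\rho(Tv)u)$ and $[\![Tu,Tv,Tw]\!]=T(D_{\rho,\mu}(Tu,Tv)w+\mu(Tv,Tw)u-\mu(Tu,Tw)v)$. The coadjoint representation is $V=\mathfrak g^*$, $\rho(x)=\mathrm{ad}^*_x$ with $\langle\mathrm{ad}^*_x\alpha,z\rangle=-\langle\alpha,[x,z]\rangle$, and $\mu(x,y)=-(\mathfrak R(y,x))^*$, where $\mathfrak R(x,y)z=[\![z,x,y]\!]$ and $\langle(\mathfrak R(x,y))^*\alpha,z\rangle=-\langle\alpha,\mathfrak R(x,y)z\rangle$. *)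

From HB Require Import structures.
From mathcomp Require Import all_boot all_order all_algebra.
Set Implicit Arguments. Unset Strict Implicit. Unset Printing Implicit Defensive.
Import GRing.Theory.
Local Open Scope ring_scope.

Section LieYamaguti.
Variable K : fieldType.
Variable g : vectType K.

(* The dual space g^* : linear forms on g, i.e. 'Hom(g, K^o);
   the pairing <alpha, x> is function application  alpha x. *)
Definition dualsp := 'Hom(g, K^o).

(* f^* for a linear endomorphism f of g, with the paper's sign convention
   <f^* alpha, z> = - <alpha, f z>. *)
Definition dual_map (f : g -> g) (a : dualsp) : dualsp :=
  linfun (fun z : g => - (a (f z) : K^o)).

Definition LieYamaguti (br : g -> g -> g) (tri : g -> g -> g -> g) : Prop :=
  (forall x, linear (br x)) /\ (forall x y, br x y = - br y x) /\
  (forall x y, linear (tri x y)) /\ (forall x z, linear (fun y => tri x y z)) /\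
  (forall y z, linear (fun x => tri x y z)) /\
  (forall x y z, tri x y z = - tri y x z) /\
  (forall x y z, br (br x y) z + br (br y z) x + br (br z x) y
                 + tri x y z + tri y z x + tri z x y = 0) /\
  (forall x y z w, tri (br x y) z w + tri (br y z) x w + tri (br z x) y w = 0) /\
  (forall x y z w, tri x y (br z w) = br (tri x y z) w + br z (tri x y w)) /\
  (forall x y z w t, tri x y (tri z w t)
                     = tri (tri x y z) w t + tri z (tri x y w) t + tri z w (tri x y t)).

Definition symplectic (br : g -> g -> g) (tri : g -> g -> g -> g)
  (om : g -> g -> K^o) : Prop :=
  (forall x, linear (om x)) /\ (forall y, linear (fun x => om x y)) /\
  (forall x y, om x y = - om y x) /\
  (forall x, (forall y, om x y = 0) -> x = 0) /\
  (forall x y z, om x (br y z) + om y (br z x) + om z (br x y) = 0) /\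
  (forall x y z w, om z (tri x y w) - om x (tri w z y) + om y (tri w z x)
                   - om w (tri x y z) = 0).

Section Rep.
Variable V : lmodType K.

Definition Drm (br : g -> g -> g) (rho : g -> V -> V) (mu : g -> g -> V -> V)
  (x y : g) (v : V) : V :=
  mu y x v - mu x y v + (rho x (rho y v) - rho y (rho x v)) - rho (br x y) v.

Definition relative_RB (br : g -> g -> g) (tri : g -> g -> g -> g)
  (rho : g -> V -> V) (mu : g -> g -> V -> V) (T : V -> g) : Prop :=
  linear T /\
  (forall u v, br (T u) (T v) = T (rho (T u) v - rho (T v) u)) /\
  (forall u v w, tri (T u) (T v) (T w)
     = T (Drm br rho mu (T u) (T v) w + mu (T v) (T w) u - mu (T u) (T w) v)).
End Rep.

Definition coad_rho (br : g -> g -> g) (x : g) : dualsp -> dualsp :=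
  dual_map (br x).
Definition Rop (tri : g -> g -> g -> g) (x y : g) : g -> g := fun z => tri z x y.
Definition coad_mu (tri : g -> g -> g -> g) (x y : g) : dualsp -> dualsp :=
  fun a => - dual_map (Rop tri y x) a.

End LieYamaguti.

From HB Require Import structures.
From mathcomp Require Import all_boot all_order all_algebra ring.
Import GRing.Theory.
Local Open Scope ring_scope.
Set Implicit Arguments. Unset Strict Implicit.

(* As T is invertible, every element of g^* is T^-1 x, so the two Rota-Baxter
   identities need only be tested on u = T^-1 x, v = T^-1 y, w = T^-1 z.  Applying
   T^-1 and pairing with one more vector turns them into scalar identities in
   omega(x, y) = <T^-1 x, y>.  Skew-symmetry of omega (equivalent to that of T)
   then makes the first identity the cyclic condition on omega and [.,.], and,
   once identity (1) has rewritten D(x,y) for the coadjoint representation as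
   the dual of [[x,y,.]], the second one the condition on omega and [[.,.,.]]. *)

Definition mkLinear (K : fieldType) (U V : lmodType K) (f : U -> V) (fL : linear f)
  : {linear U -> V} := HB.pack f (GRing.isLinear.Build _ _ _ _ f fL).

Lemma linear_funN (K : fieldType) (U V : lmodType K) (f : U -> V) :
  linear f -> forall x, f (- x) = - f x.
Proof. by move=> fL; apply: (linearN (mkLinear fL)). Qed.

Section Coadjoint.
Variables (K : fieldType) (g : vectType K).

Lemma dual_mapE (f : g -> g) (a : dualsp g) z :
  linear f -> dual_map f a z = - (a (f z) : K^o).
Proof.
move=> fL; have aofL : linear (fun z : g => - (a (f z) : K^o)).
  by move=> k u v; rewrite fL linearP /= opprD scalerN.
exact: (lfunE (mkLinear aofL)).
Qed.

Variables (br : g -> g -> g) (tri : g -> g -> g -> g).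
Hypothesis hLY : LieYamaguti br tri.

Lemma LY_br_linear x : linear (br x). Proof. by case: hLY. Qed.
Lemma LY_br_skew x y : br x y = - br y x. Proof. by case: hLY => _ []. Qed.
Lemma LY_tri_linear1 y z : linear (fun x => tri x y z).
Proof. by case: hLY => _ [_ [_ [_ []]]]. Qed.
Lemma LY_tri_skew x y z : tri x y z = - tri y x z.
Proof. by case: hLY => _ [_ [_ [_ [_ []]]]]. Qed.
Lemma LY_jacobi x y z : br (br x y) z + br (br y z) x + br (br z x) y
                        + tri x y z + tri y z x + tri z x y = 0.
Proof. by case: hLY => _ [_ [_ [_ [_ [_ []]]]]]. Qed.

Lemma coad_rhoE x (a : dualsp g) t : coad_rho br x a t = - a (br x t).
Proof. exact/dual_mapE/LY_br_linear. Qed.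

Lemma dual_RopE x y (a : dualsp g) t : dual_map (Rop tri x y) a t = - a (tri t x y).
Proof. exact/dual_mapE/LY_tri_linear1. Qed.

Lemma coad_DrmE x y (a : dualsp g) t :
  Drm br (coad_rho br) (coad_mu tri) x y a t = - a (tri x y t).
Proof.
rewrite /Drm /coad_mu !(add_lfunE, opp_lfunE) !dual_RopE !coad_rhoE !opprK.
have J := LY_jacobi x y t.
rewrite (LY_tri_skew y t) (LY_br_skew (br y t)) (LY_br_skew (br t x)) (LY_br_skew t x)
        (linear_funN (LY_br_linear y)) opprK in J.
move/(congr1 a): J; rewrite linear0 !linearD !linearN /= => /eqP.
by rewrite -!addrA addr_eq0 => /eqP ->; ring.
Qed.

Variables (T : 'Hom(dualsp g, g)) (Tinv : 'Hom(g, dualsp g)).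
Hypotheses (hTK : cancel T Tinv) (hKT : cancel Tinv T).
Hypothesis hskew : forall a b : dualsp g, (a (T b) : K) + (b (T a) : K) = 0.

Lemma Tinv_skew x y : Tinv x y = - Tinv y x.
Proof.
have := hskew (Tinv x) (Tinv y); rewrite !hKT => /eqP.
by rewrite addr_eq0 => /eqP.
Qed.

Lemma eq_T_iff (b : g) (a : dualsp g) : b = T a <-> (forall t, Tinv b t = a t).
Proof.
split=> [-> t | ba]; first by rewrite hTK.
by rewrite -(hKT b); congr (T _); apply/lfunP.
Qed.

Lemma forall_dual_Tinv (P : dualsp g -> Prop) :
  (forall u, P u) <-> (forall x, P (Tinv x)).
Proof. by split=> [Pu x | Px u]; rewrite // -(hTK u). Qed.

Lemma RB_br_iff_cyclic x y :
  br x y = T (coad_rho br x (Tinv y) - coad_rho br y (Tinv x))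
  <-> (forall z, Tinv x (br y z) + Tinv y (br z x) + Tinv z (br x y) = 0).
Proof.
have diff z : (coad_rho br x (Tinv y) - coad_rho br y (Tinv x)) z - Tinv (br x y) z
              = Tinv x (br y z) + Tinv y (br z x) + Tinv z (br x y).
  rewrite add_lfunE opp_lfunE !coad_rhoE (Tinv_skew _ z) (LY_br_skew z x).
  by rewrite (linearN (Tinv y)) /=; ring.
rewrite eq_T_iff; split=> H z; first by rewrite -diff H subrr.
by apply/esym/eqP; rewrite -subr_eq0 diff H.
Qed.

Lemma RB_tri_iff x y z :
  tri x y z = T (Drm br (coad_rho br) (coad_mu tri) x y (Tinv z)
                 + coad_mu tri y z (Tinv x) - coad_mu tri x z (Tinv y))
  <-> (forall t, Tinv z (tri x y t) - Tinv x (tri t z y) + Tinv y (tri t z x)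
                 - Tinv t (tri x y z) = 0).
Proof.
have diff t : Tinv (tri x y z) t - (Drm br (coad_rho br) (coad_mu tri) x y (Tinv z)
                 + coad_mu tri y z (Tinv x) - coad_mu tri x z (Tinv y)) t
   = Tinv z (tri x y t) - Tinv x (tri t z y) + Tinv y (tri t z x) - Tinv t (tri x y z).
  rewrite 2!add_lfunE opp_lfunE coad_DrmE /coad_mu !opp_lfunE !dual_RopE.
  by rewrite (Tinv_skew _ t); ring.
rewrite eq_T_iff; split=> H t; first by rewrite -diff H subrr.
by apply/eqP; rewrite -subr_eq0 diff H.
Qed.

End Coadjoint.

Theorem theorem4p3 (K : fieldType) (hK : [pchar K] =i pred0) (g : vectType K)
  (br : g -> g -> g) (tri : g -> g -> g -> g) (hLY : LieYamaguti br tri)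
  (T : 'Hom(dualsp g, g)) (Tinv : 'Hom(g, dualsp g))
  (hTK : cancel T Tinv) (hKT : cancel Tinv T)
  (hskew : forall a b : dualsp g, (a (T b) : K) + (b (T a) : K) = 0) :
  symplectic br tri (fun x y : g => Tinv x y)
  <-> relative_RB br tri (coad_rho br) (coad_mu tri) T.
Proof.
have br_iff := RB_br_iff_cyclic hLY hTK hKT hskew.
have tri_iff := RB_tri_iff hLY hTK hKT hskew.
split.
- case=> _ [_ [_ [_ [cyclic tri_cond]]]]; split; first exact: linearP.
  split.
  + do 2 apply/(forall_dual_Tinv hTK) => ?; rewrite !hKT.
    by apply/br_iff => z; apply: cyclic.
  + do 3 apply/(forall_dual_Tinv hTK) => ?; rewrite !hKT.
    by apply/tri_iff => t; apply: tri_cond.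
- case=> _ [RB_br RB_tri]; split; first by move=> x; exact: linearP.
  split; first by move=> y k u v; rewrite linearP add_lfunE scale_lfunE.
  split; first exact: (Tinv_skew hKT hskew).
  split.
    move=> x x0; rewrite -(hKT x) (_ : Tinv x = 0) ?linear0 //.
    by apply/lfunP => y; rewrite x0 zero_lfunE.
  split=> [x y z | x y z w].
  + by have := RB_br (Tinv x) (Tinv y); rewrite !hKT => /br_iff.
  + by have := RB_tri (Tinv x) (Tinv y) (Tinv z); rewrite !hKT => /tri_iff.
Qed.
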